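(* Let $X$ be a real Banach space and let $A \subset X$ be a balanced, bounded, convex, closed subset with nonempty interior. If there is a compact subset $K \subset X$ such that $B_X \subset A + K$, then for every $\lambda$ with $0<\lambda < 1/2$, $A$ contains a finite-codimensional ball of radius $\lambda$, i.e. there exist $x \in A$ and a finite-codimensional linear subspace $Y \subset X$ with $x + \lambda B_Y \subset A$.
   Context: $B_X$ is the closed unit ball of $X$ and $B_Y = B_X \cap Y$. $A$ is balanced if $tA \subset A$ for all $|t| \le 1$. $A + K$ is the Minkowski sum $\{a+c: a\in A, c\in K\}$. *)

From HB Require Import structures.
From mathcomp Require Import all_boot all_order all_algebra.
From mathcomp Require Import all_classical all_reals all_analysis.
Set Implicit Arguments. Unset Strict Implicit. Unset Printing Implicit Defensive.
Import Order.TTheory GRing.Theory Num.Theory.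
Import numFieldNormedType.Exports.
Local Open Scope classical_set_scope.
Local Open Scope ring_scope.

Definition unit_cball {R : realType} {X : normedModType R} : set X :=
  [set x | `|x| <= 1].

Definition balanced {R : realType} {X : normedModType R} (A : set X) :=
  forall t : R, `|t| <= 1 -> forall a, A a -> A (t *: a).

Definition convex {R : realType} {X : normedModType R} (A : set X) :=
  forall x y (t : R), A x -> A y -> 0 <= t -> t <= 1 ->
    A (t *: x + (1 - t) *: y).

Definition minkowski_sum {R : realType} {X : normedModType R} (A K : set X) : set X :=
  [set a + c | a in A & c in K].

Definition linear_subspace {R : realType} {X : normedModType R} (Y : set X) :=
  Y 0 /\ (forall y z, Y y -> Y z -> Y (y + z)) /\
  (forall (t : R) y, Y y -> Y (t *: y)).

Definition finite_codim {R : realType} {X : normedModType R} (Y : set X) :=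
  exists (n : nat) (v : 'I_n -> X), forall x : X,
    exists (y : X) (c : 'I_n -> R), Y y /\ x = y + \sum_(i < n) c i *: v i.

(* Let p be the Minkowski gauge of A.  As A is a balanced convex neighbourhood
   of 0, p is sublinear, p <= 1 on A and p < 1 implies membership in A.  If no
   ball x + lambda B_Y with x = 0 fitted in A, every finite-codimensional
   subspace would contain a point y of B_X with p y >= 1/lambda.  Choosing by
   Hahn-Banach linear functionals psi_z <= p with psi_z z = p z, one builds such
   points x_n with x_j in the kernel of psi_(x_i) for all i < j.  Writing
   x_n = a_n + k_n with a_n in A and k_n in K, compactness of K gives i < j with
   k_i and k_j arbitrarily close, whence
     1/lambda <= p x_i = psi_(x_i) (x_i - x_j) <= p (x_i - x_j) <= 2 + o(1),
   contradicting lambda < 1/2. *)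

From HB Require Import structures.
From mathcomp Require Import all_boot all_order all_algebra.
From mathcomp Require Import all_classical all_reals all_analysis.
From mathcomp Require Import lra.
Import Order.TTheory GRing.Theory Num.Theory.
Import numFieldNormedType.Exports.
Local Open Scope classical_set_scope.
Local Open Scope ring_scope.
Set Implicit Arguments. Unset Strict Implicit. Unset Printing Implicit Defensive.

Section HahnBanach.
Variables (R : realType) (X : lmodType R).

Definition sublinear (p : X -> R) :=
  (forall x y, p (x + y) <= p x + p y) /\
  (forall (t : R) x, 0 < t -> p (t *: x) = t * p x).

Definition linear_functional (f : X -> R) :=
  (forall x y, f (x + y) = f x + f y) /\ (forall (t : R) x, f (t *: x) = t * f x).

Variables (p : X -> R) (x0 : X).
Hypothesis p_sublinear : sublinear p.

Let p_subadd := p_sublinear.1.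
Let p_homog := p_sublinear.2.

Lemma sublinear0 : p 0 = 0.
Proof. by have := @p_homog 2 0 (ltr0Sn _ 1); rewrite scaler0 => h; lra. Qed.

Lemma sublinear_opp x : - p (- x) <= p x.
Proof. by have := p_subadd x (- x); rewrite subrr sublinear0; lra. Qed.

(* A partial linear functional dominated by [p] that agrees with [p] at [x0],
   encoded by its graph, a linear subspace of [X * R]. *)
Definition dominated_graph (G : set (X * R)) :=
  [/\ G (x0, p x0),
      (forall x a y b, G (x, a) -> G (y, b) -> G (x + y, a + b)),
      (forall (t : R) x a, G (x, a) -> G (t *: x, t * a)) &
      (forall x a, G (x, a) -> a <= p x)].

Lemma dominated_graph_functional G x a b :
  dominated_graph G -> G (x, a) -> G (x, b) -> a = b.
Proof.
move=> [_ Gadd Gscale Gdom] Ga Gb.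
have := Gdom _ _ (Gadd _ _ _ _ Ga (Gscale (-1) _ _ Gb)).
have := Gdom _ _ (Gadd _ _ _ _ Gb (Gscale (-1) _ _ Ga)).
by rewrite scaleN1r subrr sublinear0; lra.
Qed.

Lemma dominated_graph0 G : dominated_graph G -> G (0, 0).
Proof.
by case=> Gx0 _ Gscale _; have := Gscale 0 _ _ Gx0; rewrite scale0r mul0r.
Qed.

Lemma dominated_graph_line :
  dominated_graph [set (t *: x0, t * p x0) | t in [set: R]].
Proof.
split.
- by exists 1; rewrite ?scale1r ?mul1r.
- move=> _ _ _ _ [t _ [<- <-]] [s _ [<- <-]].
  by exists (t + s); rewrite // scalerDl mulrDl.
- move=> u _ _ [t _ [<- <-]].
  by exists (u * t); rewrite // scalerA mulrA.
- move=> _ _ [t _ [<- <-]].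
  have [t_lt0|t_gt0|->] := ltgtP t 0; last by rewrite scale0r mul0r sublinear0.
  + have := sublinear_opp (t *: x0).
    by rewrite -scaleNr (@p_homog (- t)) ?oppr_gt0 //; nra.
  + by rewrite p_homog.
Qed.

Lemma dominated_graph_bigcup (F : set (set (X * R))) :
  F `<=` [set G | G = set0 \/ dominated_graph G] -> total_on F subset ->
  let U := \bigcup_(G in F) G in U = set0 \/ dominated_graph U.
Proof.
move=> FP Ftot U.
have [[G0 FG0 [xa0 G0xa0]]|Fempty] :=
  pselect (exists2 G, F G & G !=set0); last first.
  left; apply/seteqP; split => // xa [G FG Gxa]; apply: Fempty.
  by exists G => //; exists xa.
have FG_dominated G : F G -> (exists xa, G xa) -> dominated_graph G.
  by move=> /FP [->|//] [xa []].
right; split.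
- by exists G0 => //; case: (FG_dominated _ FG0 (ex_intro _ _ G0xa0)).
- move=> x a y b [G1 FG1 G1xa] [G2 FG2 G2yb].
  have [G12|G21] := Ftot _ _ FG1 FG2.
  + exists G2 => //; have [_ G2add _ _] := FG_dominated _ FG2 (ex_intro _ _ G2yb).
    exact/G2add/G2yb/G12.
  + exists G1 => //; have [_ G1add _ _] := FG_dominated _ FG1 (ex_intro _ _ G1xa).
    exact/G1add/G21.
- move=> t x a [G FG Gxa]; exists G => //.
  by have [_ _ Gscale _] := FG_dominated _ FG (ex_intro _ _ Gxa); apply: Gscale.
- move=> x a [G FG Gxa].
  by have [_ _ _ Gdom] := FG_dominated _ FG (ex_intro _ _ Gxa); apply: Gdom.
Qed.

Section Extension.
Variables (G : set (X * R)) (x1 : X).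
Hypothesis G_dominated : dominated_graph G.

Lemma dominated_graph_slope : exists c, forall y b, G (y, b) ->
  b - p (y - x1) <= c /\ c <= p (y + x1) - b.
Proof.
have [_ Gadd _ Gdom] := G_dominated.
have lower_upper y b z d :
    G (y, b) -> G (z, d) -> b - p (y - x1) <= p (z + x1) - d.
  move=> Gyb Gzd; have := Gdom _ _ (Gadd _ _ _ _ Gyb Gzd).
  have := p_subadd (y - x1) (z + x1); rewrite addrACA addNr addr0; lra.
pose L := [set yb.2 - p (yb.1 - x1) | yb in G].
have G00 := dominated_graph0 G_dominated.
have L_ub : ubound L (p (0 + x1) - 0).
  by move=> _ [[z d] Gzd <-]; exact: lower_upper.
have L_sup : has_sup L.
  by split; [exists (0 - p (0 - x1)); exists (0, 0) | exists (p (0 + x1) - 0)].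
exists (sup L) => y b Gyb; split.
  by apply: sup_upper_bound => //; exists (y, b).
by apply: ge_sup => [|_ [[z d] Gzd <-]]; [case: L_sup | exact: lower_upper].
Qed.

Lemma dominated_graph_extend :
  (forall a, ~ G (x1, a)) -> exists2 G', G `<` G' & dominated_graph G'.
Proof.
move=> x1_notin; have [c c_slope] := dominated_graph_slope.
have [Gx0 Gadd Gscale Gdom] := G_dominated.
pose G' := [set xa : X * R |
  exists t y b, G (y, b) /\ xa = (y + t *: x1, b + t * c)].
exists G'; last split.
- split => [[y b] Gyb|].
    by exists 0, y, b; rewrite scale0r mul0r !addr0.
  move/(_ (x1, c)) => G'x1; apply: (x1_notin c); apply: G'x1.
  exists 1, 0, 0; rewrite scale1r mul1r !add0r.
  by split => //; exact: dominated_graph0.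
- by exists 0, x0, (p x0); rewrite scale0r mul0r !addr0.
- move=> _ _ _ _ [t [y [b [Gyb [-> ->]]]]] [s [z [d [Gzd [-> ->]]]]].
  exists (t + s), (y + z), (b + d); split; first exact: Gadd.
  by rewrite scalerDl mulrDl; congr (_, _); rewrite addrACA.
- move=> u _ _ [t [y [b [Gyb [-> ->]]]]].
  exists (u * t), (u *: y), (u * b); split; first exact: Gscale.
  by rewrite scalerDr scalerA mulrDr mulrA.
- move=> _ _ [t [y [b [Gyb [-> ->]]]]].
  have [t_lt0|t_gt0|->] := ltgtP t 0;
    last by rewrite scale0r mul0r !addr0; exact: Gdom.
  + have s_gt0 : 0 < - t by rewrite oppr_gt0.
    have := (c_slope _ _ (Gscale (- t)^-1 _ _ Gyb)).1.
    have -> : (- t)^-1 *: y - x1 = (- t)^-1 *: (y + t *: x1).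
      by rewrite scalerDr scalerA invrN mulNr mulVf ?lt_eqF // scaleN1r.
    rewrite (@p_homog (- t)^-1) ?invr_gt0 // -mulrBr -(ler_pM2l s_gt0).
    by rewrite mulrA mulfV ?gt_eqF // mul1r; lra.
  + have := (c_slope _ _ (Gscale t^-1 _ _ Gyb)).2.
    have -> : t^-1 *: y + x1 = t^-1 *: (y + t *: x1).
      by rewrite scalerDr scalerA mulVf ?gt_eqF // scale1r.
    rewrite (@p_homog t^-1) ?invr_gt0 // -mulrBr -(ler_pM2l t_gt0).
    by rewrite mulrA mulfV ?gt_eqF // mul1r; lra.
Qed.

End Extension.

Theorem hahn_banach : exists f : X -> R,
  [/\ linear_functional f, (forall x, f x <= p x) & f x0 = p x0].
Proof.
(* [set0] is allowed so that the empty chain has an upper bound. *)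
have [M [M_dominated M_max]] : exists M, (M = set0 \/ dominated_graph M) /\
    forall G, M `<` G -> ~ (G = set0 \/ dominated_graph G).
  by apply: Zorn_bigcup => F FP Ftot; exact: dominated_graph_bigcup.
have {M_dominated}M_dominated : dominated_graph M.
  case: M_dominated => // M0; exfalso.
  apply: (M_max _ _ (or_intror dominated_graph_line)).
  rewrite M0; split => //; move/(_ (x0, p x0)); apply.
  by exists 1; rewrite ?scale1r ?mul1r.
have M_total x : exists a, M (x, a).
  apply/not_existsP => x_notin.
  have [G MG G_dominated] := dominated_graph_extend M_dominated x_notin.
  exact: M_max MG (or_intror G_dominated).
have [f Mf] := choice M_total.
have [Mx0 Madd Mscale Mdom] := M_dominated.
exists f; split => //; first split.
- move=> x y.
  exact: dominated_graph_functional M_dominated (Mf _) (Madd _ _ _ _ (Mf x) (Mf y)).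
- move=> t x.
  exact: dominated_graph_functional M_dominated (Mf _) (Mscale _ _ _ (Mf x)).
- by move=> x; exact: Mdom.
- exact: dominated_graph_functional M_dominated (Mf _) Mx0.
Qed.

Lemma norming_functional_le_sub f x y :
  linear_functional f -> (forall z, f z <= p z) -> f x = p x -> f y = 0 ->
  p x <= p (x - y).
Proof.
move=> [f_add f_scale] f_le fx fy.
by rewrite -fx -[f x]subr0 -fy -mulN1r -f_scale -f_add scaleN1r f_le.
Qed.

End HahnBanach.

Section FiniteCodimension.
Variables (R : realType) (X : normedModType R).

Lemma linear_subspaceT : linear_subspace [set: X].
Proof. by []. Qed.

Lemma finite_codimT : finite_codim [set: X].
Proof.
by exists 0%N, (fun=> 0) => x; exists x, (fun=> 0); rewrite big_ord0 addr0.
Qed.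

Section Kernel.
Variables (Y : set X) (f : X -> R).
Hypotheses (Y_lin : linear_subspace Y) (f_lin : linear_functional f).

Let f_add := f_lin.1.
Let f_scale := f_lin.2.

Lemma linear_subspace_kernel : linear_subspace (Y `&` [set y | f y = 0]).
Proof.
have [Y0 [Yadd Yscale]] := Y_lin.
split; first by split => //; have := f_scale 0 0; rewrite scale0r mul0r.
split=> [y z [Yy fy] [Yz fz]|t y [Yy fy]]; split.
- exact: Yadd.
- by rewrite /= f_add fy fz addr0.
- exact: Yscale.
- by rewrite /= f_scale fy mulr0.
Qed.

Lemma finite_codim_kernel :
  finite_codim Y -> finite_codim (Y `&` [set y | f y = 0]).
Proof.
have [_ [Yadd Yscale]] := Y_lin.
move=> [n [v Yv]].
have [[u Yu fu_neq0]|f_vanish] := pselect (exists2 u, Y u & f u != 0); last first.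
  exists n, v => x; have [y [c [Yy ->]]] := Yv x; exists y, c; split => //.
  split => //; apply/eqP; apply: contrapT => fy; apply: f_vanish.
  by exists y => //; apply/negP.
exists n.+1, (fun i => oapp v u (unlift ord_max i)) => x.
have [y [c [Yy ->]]] := Yv x.
exists (y - (f y / f u) *: u), (fun i => oapp c (f y / f u) (unlift ord_max i)).
split.
  split; first by apply: Yadd => //; rewrite -scaleN1r; do 2!apply: (Yscale).
  by rewrite /= f_add -scaleN1r !f_scale divfK // mulN1r subrr.
rewrite big_ord_recr /= unlift_none /=.
rewrite [in RHS](eq_bigr (fun i => c i *: v i)); last first.
  move=> i _; rewrite (_ : widen_ord _ i = lift ord_max i) ?liftK //.
  by apply: ord_inj; rewrite lift_max.
by rewrite [RHS]addrCA subrK addrC.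
Qed.

End Kernel.

Lemma orthogonal_sequence (P : X -> Prop) (psi : X -> X -> R) :
  (forall z, linear_functional (psi z)) ->
  (forall Y, linear_subspace Y -> finite_codim Y -> exists2 y, Y y & P y) ->
  exists x : nat -> X, (forall n, P (x n)) /\
    (forall i j, (i < j)%N -> psi (x i) (x j) = 0).
Proof.
move=> psi_lin P_dense.
pose kernels (s : seq X) :=
  foldr (fun z Y => Y `&` [set y | psi z y = 0]) [set: X] s.
have kernelsP s : linear_subspace (kernels s) /\ finite_codim (kernels s).
  elim: s => [|z s [Ylin Ycodim]].
    by split; [exact: linear_subspaceT | exact: finite_codimT].
  by split; [exact: linear_subspace_kernel | exact: finite_codim_kernel].
have kernels_orth s z y : z \in s -> kernels s y -> psi z y = 0.
  elim: s => // w s IH; rewrite in_cons => /orP[/eqP-> [] //| zs [] ].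
  by move=> /(IH zs).
have next_ex s : exists y, kernels s y /\ P y.
  have [Ylin Ycodim] := kernelsP s.
  by have [y] := P_dense _ Ylin Ycodim; exists y.
have [next nextP] := choice next_ex.
pose fix prefix n := if n is m.+1 then next (prefix m) :: prefix m else [::].
exists (fun n => next (prefix n)); split => [n|i j ij].
  by have [] := nextP (prefix n).
apply: (kernels_orth (prefix j)); last by have [] := nextP (prefix j).
elim: j ij => // j IH; rewrite ltnS leq_eqVlt => /orP[/eqP-> | /IH ij].
  by rewrite in_cons eqxx.
by rewrite in_cons ij orbT.
Qed.

End FiniteCodimension.

Section MinkowskiGauge.
Variables (R : realType) (X : normedModType R) (A : set X).

Definition gauge_set (z : X) : set R := [set t | 0 < t /\ A (t^-1 *: z)].

Definition minkowski_gauge (z : X) : R := inf (gauge_set z).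

Lemma gauge_set_lbound z : lbound (gauge_set z) 0.
Proof. by move=> t [t_gt0 _]; exact: ltW. Qed.

Lemma minkowski_gauge_le z t : gauge_set z t -> minkowski_gauge z <= t.
Proof. by move=> zt; apply: ge_inf => //; exists 0; exact: gauge_set_lbound. Qed.

Lemma minkowski_gauge_le1 a : A a -> minkowski_gauge a <= 1.
Proof.
by move=> Aa; apply: minkowski_gauge_le; split; rewrite ?invr1 ?scale1r.
Qed.

Variable r : R.
Hypotheses (r_gt0 : 0 < r) (A_ball : forall z, `|z| < r -> A z).

Lemma gauge_set_gt z t : `|z| / r < t -> gauge_set z t.
Proof.
move=> zt; have t_gt0 : 0 < t.
  by apply: le_lt_trans _ zt; rewrite divr_ge0 ?normr_ge0 ?ltW.
split => //; apply: A_ball; rewrite normrZ gtr0_norm ?invr_gt0 //.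
by rewrite mulrC ltr_pdivrMr // mulrC -ltr_pdivrMr.
Qed.

Lemma minkowski_gauge_le_norm z : minkowski_gauge z <= `|z| / r.
Proof.
apply/ler_addgt0Pr => e e_gt0.
by apply/minkowski_gauge_le/gauge_set_gt; rewrite ltrDl.
Qed.

Lemma has_inf_gauge_set z : has_inf (gauge_set z).
Proof.
split; first by exists (`|z| / r + 1); apply: gauge_set_gt; rewrite ltrDl.
by exists 0; exact: gauge_set_lbound.
Qed.

Let minkowski_gauge_scale_le t z : 0 < t ->
  minkowski_gauge (t *: z) <= t * minkowski_gauge z.
Proof.
move=> t_gt0; rewrite -ler_pdivrMl //.
apply: lb_le_inf; first by case: (has_inf_gauge_set z).
move=> s [s_gt0 As]; rewrite ler_pdivrMl //; apply: minkowski_gauge_le; split.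
  exact: mulr_gt0.
by rewrite scalerA invfM mulrAC mulVf ?gt_eqF // mul1r.
Qed.

Lemma minkowski_gauge_scale t z : 0 < t ->
  minkowski_gauge (t *: z) = t * minkowski_gauge z.
Proof.
move=> t_gt0; apply/eqP; rewrite eq_le minkowski_gauge_scale_le //=.
have tV_gt0 : 0 < t^-1 by rewrite invr_gt0.
have := minkowski_gauge_scale_le (t *: z) tV_gt0.
by rewrite scalerA mulVf ?gt_eqF // scale1r -ler_pdivlMl.
Qed.

Hypothesis A_convex : convex A.

Lemma minkowski_gauge_add z w :
  minkowski_gauge (z + w) <= minkowski_gauge z + minkowski_gauge w.
Proof.
apply/ler_addgt0Pr => e e_gt0; have e2_gt0 : 0 < e / 2 by exact: divr_gt0.
have [s [s_gt0 As] s_lt] := inf_adherent e2_gt0 (has_inf_gauge_set z).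
have [u [u_gt0 Au] u_lt] := inf_adherent e2_gt0 (has_inf_gauge_set w).
have su_gt0 : 0 < s + u by exact: addr_gt0.
suff : minkowski_gauge (z + w) <= s + u.
  move/le_trans; apply.
  by have := ltrD s_lt u_lt; rewrite addrACA -splitr => /ltW.
apply: minkowski_gauge_le; split => //.
have := @A_convex _ _ (s / (s + u)) As Au.
have -> : 1 - s / (s + u) = u / (s + u).
  by rewrite -[1](@divff _ (s + u)) ?gt_eqF // -mulrBl [s + u]addrC addrK.
rewrite !scalerA mulrAC mulfV ?gt_eqF // mulrAC mulfV ?gt_eqF // !mul1r -scalerDr.
apply; first by rewrite divr_ge0 ?ltW.
by rewrite ler_pdivrMr // mul1r lerDl ltW.
Qed.

Lemma minkowski_gauge_sublinear : sublinear minkowski_gauge.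
Proof. by split; [exact: minkowski_gauge_add | exact: minkowski_gauge_scale]. Qed.

Hypothesis A_balanced : balanced A.

Lemma minkowski_gauge_lt1 z : minkowski_gauge z < 1 -> A z.
Proof.
move=> z_lt1; have e_gt0 : 0 < 1 - minkowski_gauge z by rewrite subr_gt0.
have [t [t_gt0 At]] := inf_adherent e_gt0 (has_inf_gauge_set z).
rewrite addrC subrK => t_lt1.
rewrite -[z](scale1r z) -[1](mulfV (lt0r_neq0 t_gt0)) -scalerA.
by apply: A_balanced => //; rewrite ger0_norm ?ltW.
Qed.

Lemma minkowski_gauge_notin t z :
  0 < t -> ~ A (t *: z) -> t^-1 <= minkowski_gauge z.
Proof.
move=> t_gt0 notA; rewrite leNgt; apply/negP => z_lt.
apply/notA/minkowski_gauge_lt1.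
by rewrite minkowski_gauge_scale // -ltr_pdivlMl // mulr1.
Qed.

Lemma minkowski_gauge_sub_le a b k l : A a -> A b ->
  minkowski_gauge (a + k - (b + l)) <= 2 + `|k - l| / r.
Proof.
move=> Aa Ab; have A_b : A (- b).
  by rewrite -scaleN1r; apply: A_balanced; rewrite ?normrN1.
rewrite opprD addrACA; apply: le_trans (minkowski_gauge_add _ _) _.
apply: lerD; last exact: minkowski_gauge_le_norm.
apply: le_trans (minkowski_gauge_add _ _) _.
by have := lerD (minkowski_gauge_le1 Aa) (minkowski_gauge_le1 A_b); lra.
Qed.

End MinkowskiGauge.

Lemma balanced_convex_nbhs0 (R : realType) (X : normedModType R) (A : set X) :
  balanced A -> convex A -> A° !=set0 ->
  exists2 r : R, 0 < r & forall z, `|z| < r -> A z.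
Proof.
move=> A_balanced A_convex [a /nbhs_ballP [r r_gt0 ball_A]].
exists r => // z zr.
have Aaz : A (a + z).
  by apply: ball_A; rewrite -ball_normE /ball_ /= opprD addNKr normrN.
have A_az : A (z - a).
  rewrite -opprB -scaleN1r; apply: A_balanced; first by rewrite normrN1.
  by apply: ball_A; rewrite -ball_normE /ball_ /= opprB addrC subrK.
have := @A_convex _ _ 2^-1 Aaz A_az.
have -> : 1 - 2^-1 = 2^-1 :> R by lra.
rewrite -scalerDr (_ : a + z + (z - a) = 2 *: z); last first.
  by rewrite addrC addrA subrK scaler_nat mulr2n.
rewrite scalerA mulVf ?pnatr_eq0 // scale1r; apply.
  by rewrite invr_ge0 ler0n.
by rewrite invf_le1 ?ler1n ?ltr0n.
Qed.

Lemma compact_seq_close_pair (R : realType) (X : normedModType R) (K : set X)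
    (k : nat -> X) (e : R) :
  compact K -> (forall n, K (k n)) -> 0 < e ->
  exists i j, (i < j)%N /\ `|k i - k j| < e.
Proof.
move=> Kcompact Kk e_gt0.
have [c [_ c_cluster]] : K `&` cluster (k @ \oo) !=set0.
  by apply: Kcompact; exists 0%N => // n _; exact: Kk.
have near_c N : exists2 n, (N <= n)%N & `|c - k n| < e / 2.
  have tail_N : (k @ \oo) (k @` [set n | (N <= n)%N]).
    by exists N => // n Nn; exists n.
  have [_ [[n Nn <-] cn]] :=
    c_cluster _ _ tail_N (nbhsx_ballx c _ (divr_gt0 e_gt0 (ltr0n _ 2))).
  by exists n => //; move: cn; rewrite -ball_normE.
have [i _ ci] := near_c 0%N.
have [j ij cj] := near_c i.+1.
exists i, j; split => //.
rewrite -(subrK c (k i)) -addrA (le_lt_trans (ler_normD _ _)) //.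
by rewrite distrC (splitr e) ltrD.
Qed.

Unset Implicit Arguments.

Theorem corollary4p4 (R : realType) (X : completeNormedModType R) (A : set X) :
  balanced A -> bounded_set A -> convex A -> closed A -> A° !=set0 ->
  (exists K : set X, compact K /\ unit_cball `<=` minkowski_sum A K) ->
  forall lambda : R, 0 < lambda -> lambda < 2^-1 ->
  exists (x : X) (Y : set X),
    A x /\ linear_subspace Y /\ finite_codim Y /\
    (forall y : X, Y y -> unit_cball y -> A (x + lambda *: y)).
Proof.
move=> A_balanced _ A_convex _ A_int [K [K_compact B_AK]] lam lam_gt0 lam_lt.
have [r r_gt0 A_ball] := balanced_convex_nbhs0 A_balanced A_convex A_int.
have gauge_sublinear := minkowski_gauge_sublinear r_gt0 A_ball A_convex.
apply: contrapT => no_ball.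
have far Y : linear_subspace Y -> finite_codim Y ->
    exists2 y, Y y & unit_cball y /\ lam^-1 <= minkowski_gauge A y.
  move=> Y_lin Y_codim; apply: contrapT => Y_near; apply: no_ball.
  exists 0, Y; split; first by apply: A_ball; rewrite normr0.
  do 2!split => //; move=> y Yy By; rewrite add0r; apply: contrapT => notA.
  apply: Y_near; exists y => //; split => //.
  exact: (minkowski_gauge_notin r_gt0 A_ball A_balanced).
have [psi psiP] := choice (fun z => hahn_banach z gauge_sublinear).
have psi_lin z : linear_functional (psi z) by case: (psiP z).
have [x [x_far x_orth]] := orthogonal_sequence psi_lin far.
have x_split n : exists ak : X * X, [/\ A ak.1, K ak.2 & x n = ak.1 + ak.2].
  by have [a Aa [k Kk <-]] := B_AK _ (x_far n).1; exists (a, k).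
have [ak akP] := choice x_split.
have K_ak n : K (ak n).2 by case: (akP n).
have e_gt0 : 0 < r * (lam^-1 - 2).
  by rewrite mulr_gt0 // subr_gt0 -(ltr_pM2r lam_gt0) mulVf ?gt_eqF //; lra.
have [i [j [ij k_close]]] := compact_seq_close_pair K_compact K_ak e_gt0.
have [[Aai _ xi] [Aaj _ xj]] := (akP i, akP j).
have [_ psi_le psi_eq] := psiP (x i).
have := norming_functional_le_sub (psi_lin _) psi_le psi_eq (x_orth i j ij).
rewrite {2}xi xj => /le_trans/(_ (minkowski_gauge_sub_le r_gt0 A_ball A_convex
  A_balanced _ _ Aai Aaj)).
rewrite mulrC -ltr_pdivrMr // in k_close.
by have [_ far_i] := x_far i; lra.
Qed.
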